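(* Let $m\in\mathbb N$ and let $\mathcal P_m$ be the $1$-dimensional PVAS (transitions and steps only; initial configuration irrelevant) with states $\{\perp,0,1,\dots,m\}$, stack alphabet $\{\gamma_0,\dots,\gamma_m\}$, and transitions: $(\perp,0,\mathrm{pop}(\gamma_0),0)$, $(0,+1,\mathrm{nop},\perp)$, and for each $i\in\{1,\dots,m\}$: $(\perp,0,\mathrm{pop}(\gamma_i),i)$, $(i,+1,\mathrm{push}(\gamma_{i-1}),\perp)$, and $(i,-1,\mathrm{push}(\gamma_{i-1}),i)$. Then for all $n\in\mathbb N$ and $j\in\{0,\dots,m\}$, $$A_j(n)=\max\{c\in\mathbb N\mid (\perp,n,\gamma_j)\xrightarrow{*}(\perp,c,\varepsilon)\},$$ and in particular this maximum exists.
   Context: Ackermann functions $A_j:\mathbb N\to\mathbb N$: $A_0(n)=n+1$ and $A_j(n)=A_{j-1}^{n+1}(1)$ for $j>0$ (the $(n+1)$-fold iterate). For a $1$-dimensional PVAS with transition set $\Delta\subseteq Q\times\mathbb Z\times\mathrm{Op}(\Gamma)\times Q$, configurations are $(q,c,w)\in Q\times\mathbb N\times\Gamma^*$, and $(p,c,u)\to(q,d,v)$ iff some $(p,a,\mathrm{op},q)\in\Delta$ has $d=c+a\ge 0$ and either $\mathrm{op}=\mathrm{push}(\gamma)$, $v=u\gamma$; or $\mathrm{op}=\mathrm{pop}(\gamma)$, $u=v\gamma$; or $\mathrm{op}=\mathrm{nop}$, $u=v$ (the top of the stack is the last letter). $\xrightarrow{*}$ is the reflexive transitive closure; $\varepsilon$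 is the empty word. *)

From Stdlib Require Import Arith ZArith List Relations.
Import ListNotations.

Fixpoint ack (j : nat) (n : nat) : nat :=
  match j with
  | 0 => S n
  | S j' => Nat.iter (S n) (ack j') 1
  end.

Inductive op (Gamma : Type) : Type :=
  | push : Gamma -> op Gamma
  | pop : Gamma -> op Gamma
  | nop : op Gamma.
Arguments push {Gamma} _.
Arguments pop {Gamma} _.
Arguments nop {Gamma}.

Definition transition (Q Gamma : Type) : Type := (Q * Z * op Gamma * Q)%type.

(* Configurations (q, c, w) ∈ Q × N × Γ^*; the top of the stack is the last letter. *)
Definition config (Q Gamma : Type) : Type := (Q * nat * list Gamma)%type.

Definition op_effect {Gamma : Type} (o : op Gamma) (u v : list Gamma) : Prop :=
  match o with
  | push g => v = u ++ [g]
  | pop g => u = v ++ [g]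
  | nop => u = v
  end.

Definition pvas_step {Q Gamma : Type} (Delta : transition Q Gamma -> Prop)
    (x y : config Q Gamma) : Prop :=
  let '(p, c, u) := x in
  let '(q, d, v) := y in
  exists a o, Delta (p, a, o, q) /\ Z.of_nat d = (Z.of_nat c + a)%Z /\ op_effect o u v.

Definition pvas_reach {Q Gamma : Type} (Delta : transition Q Gamma -> Prop) :
    relation (config Q Gamma) :=
  clos_refl_trans (config Q Gamma) (pvas_step Delta).

(* States {⊥, 0, 1, ..., m}: Bot and St i (only i <= m used). *)
Inductive state : Type := Bot | St (i : nat).

(* Stack alphabet {γ_0,...,γ_m}: γ_i is represented by the natural number i. *)
Definition P_trans (m : nat) (t : transition state nat) : Prop :=
  t = (Bot, 0%Z, pop 0, St 0)
  \/ t = (St 0, 1%Z, nop, Bot)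
  \/ exists i, 1 <= i <= m /\
       (t = (Bot, 0%Z, pop i, St i)
        \/ t = (St i, 1%Z, push (i - 1), Bot)
        \/ t = (St i, (-1)%Z, push (i - 1), St i)).

From Stdlib Require Import Arith ZArith List Relations Lia.
Import ListNotations.

(* Read the stack [w = [i_1; ...; i_k]] bottom to top as the function
   [A_{i_1} o ... o A_{i_k}] and a state [i] as one more [A_i]; applying this
   to the counter gives a potential that no transition increases (counting down
   in state [i] trades [A_i (c+1)] for [A_{i-1} (A_i c)], and leaving state [i]
   replaces [A_i c] by the smaller [A_{i-1} (c+1)]).  It equals [A_j n] at
   [(⊥, n, γ_j)] and [c] at [(⊥, c, ε)], which bounds the reachable counters.
   Conversely, counting down fully in state [j] and then popping the resulting
   [n+1] copies of [γ_{j-1}] computes [A_{j-1}^{n+1}(1) = A_j n]. *)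

Section Iterate.

Variable f : nat -> nat.

Lemma iter_add_le (f_gt : forall x, x < f x) t x : t + x <= Nat.iter t f x.
Proof.
  induction t as [|t IH]; simpl; [lia|].
  specialize (f_gt (Nat.iter t f x)); lia.
Qed.

Lemma iter_monotone (f_mono : forall x y, x <= y -> f x <= f y) t x y :
  x <= y -> Nat.iter t f x <= Nat.iter t f y.
Proof. intros Hxy; induction t; simpl; auto. Qed.

End Iterate.

Lemma ack_gt_mono i :
  (forall x, x < ack i x) /\ (forall x y, x <= y -> ack i x <= ack i y).
Proof.
  induction i as [|i [ack_gt ack_mono]].
  { split; simpl; intros; lia. }
  change (ack (S i)) with (fun x => Nat.iter (S x) (ack i) 1); cbv beta.
  split; intros x.
  - pose proof (iter_add_le (ack i) ack_gt (S x) 1); lia.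
  - intros y Hxy.
    replace (S y) with (S x + (y - x)) by lia.
    rewrite Nat.iter_add.
    apply iter_monotone; [exact ack_mono|].
    pose proof (iter_add_le (ack i) ack_gt (y - x) 1); lia.
Qed.

Lemma ack_gt i x : x < ack i x.
Proof. apply ack_gt_mono. Qed.

Lemma ack_mono i x y : x <= y -> ack i x <= ack i y.
Proof. apply ack_gt_mono. Qed.

Lemma ack_succ_le_ack_S i c : ack i (S c) <= ack (S i) c.
Proof.
  change (ack (S i) c) with (ack i (Nat.iter c (ack i) 1)).
  apply ack_mono.
  pose proof (iter_add_le (ack i) (ack_gt i) c 1); lia.
Qed.

Definition stack_value (w : list nat) (c : nat) : nat :=
  fold_right ack c w.

Lemma stack_value_rcons w i c :
  stack_value (w ++ [i]) c = stack_value w (ack i c).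
Proof. apply fold_right_app. Qed.

Lemma stack_value_mono w x y : x <= y -> stack_value w x <= stack_value w y.
Proof. induction w; simpl; auto using ack_mono. Qed.

Definition potential (x : config state nat) : nat :=
  match x with
  | (Bot, c, w) => stack_value w c
  | (St i, c, w) => stack_value w (ack i c)
  end.

Lemma potential_step m x y :
  pvas_step (P_trans m) x y -> potential y <= potential x.
Proof.
  destruct x as [[p c] u], y as [[q d] v]; simpl.
  intros (a & o & Ht & Hd & Huv).
  destruct Ht as [Ht|[Ht|(i & Hi & [Ht|[Ht|Ht]])]];
    injection Ht as -> -> -> ->; simpl in Huv; subst.
  - replace d with c by lia; rewrite stack_value_rcons; lia.
  - replace d with (S c) by lia; simpl; lia.
  - replace d with c by lia; rewrite stack_value_rcons; lia.
  - rewrite stack_value_rcons; replace d with (S c) by lia.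
    apply stack_value_mono.
    destruct i as [|i]; [lia|]; rewrite Nat.sub_1_r.
    apply ack_succ_le_ack_S.
  - rewrite stack_value_rcons; destruct c as [|c]; [lia|]; replace d with c by lia.
    apply stack_value_mono.
    destruct i as [|i]; [lia|]; rewrite Nat.sub_1_r; simpl; lia.
Qed.

Lemma potential_reach m x y :
  pvas_reach (P_trans m) x y -> potential y <= potential x.
Proof.
  induction 1 as [x y Hxy| |]; eauto using potential_step; lia.
Qed.

Section Runs.

Variable m : nat.

Notation step := (pvas_step (P_trans m)).
Notation reach := (pvas_reach (P_trans m)).

Lemma step_pop_0 c w : step (Bot, c, w ++ [0]) (St 0, c, w).
Proof. exists 0%Z, (pop 0); repeat split; [left|lia]; reflexivity. Qed.

Lemma step_exit_0 c w : step (St 0, c, w) (Bot, S c, w).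
Proof. exists 1%Z, nop; repeat split; [right; left|lia]; reflexivity. Qed.

Lemma step_pop_S i c w : S i <= m -> step (Bot, c, w ++ [S i]) (St (S i), c, w).
Proof.
  intros Hi; exists 0%Z, (pop (S i)); repeat split; [|lia].
  right; right; exists (S i); split; [lia|left; reflexivity].
Qed.

Lemma step_exit_S i c w : S i <= m -> step (St (S i), c, w) (Bot, S c, w ++ [i]).
Proof.
  intros Hi; exists 1%Z, (push i); repeat split; [|lia].
  right; right; exists (S i); split; [lia|right; left].
  rewrite Nat.sub_1_r; reflexivity.
Qed.

Lemma step_count_down i c w :
  S i <= m -> step (St (S i), S c, w) (St (S i), c, w ++ [i]).
Proof.
  intros Hi; exists (-1)%Z, (push i); repeat split; [|lia].
  right; right; exists (S i); split; [lia|right; right].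
  rewrite Nat.sub_1_r; reflexivity.
Qed.

Lemma reach_count_down i c w :
  S i <= m -> reach (St (S i), c, w) (St (S i), 0, w ++ repeat i c).
Proof.
  intros Hi; revert w; induction c as [|c IH]; intros w.
  - rewrite app_nil_r; apply rt_refl.
  - eapply rt_trans; [apply rt_step, step_count_down, Hi|].
    change (repeat i (S c)) with ([i] ++ repeat i c).
    rewrite app_assoc; apply IH.
Qed.

Lemma reach_pop_repeat i
    (pop_one : forall n w, reach (Bot, n, w ++ [i]) (Bot, ack i n, w)) k n w :
  reach (Bot, n, w ++ repeat i k) (Bot, Nat.iter k (ack i) n, w).
Proof.
  revert n; induction k as [|k IH]; intros n.
  - rewrite app_nil_r; apply rt_refl.
  - change (repeat i (S k)) with (i :: repeat i k).
    rewrite repeat_cons, app_assoc, Nat.iter_succ_r.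
    eapply rt_trans; [apply pop_one|apply IH].
Qed.

Lemma reach_ack j n w : j <= m -> reach (Bot, n, w ++ [j]) (Bot, ack j n, w).
Proof.
  revert n w; induction j as [|j IH]; intros n w Hj.
  - eapply rt_trans; apply rt_step; [apply step_pop_0|apply step_exit_0].
  - eapply rt_trans; [apply rt_step, step_pop_S, Hj|].
    eapply rt_trans; [apply reach_count_down, Hj|].
    eapply rt_trans; [apply rt_step, step_exit_S, Hj|].
    rewrite <- app_assoc, <- repeat_cons.
    change (j :: repeat j n) with (repeat j (S n)).
    change (ack (S j) n) with (Nat.iter (S n) (ack j) 1).
    apply reach_pop_repeat; intros; apply IH; lia.
Qed.

End Runs.

Theorem mainTheorem4 (m n j : nat) (hj : j <= m) :
  pvas_reach (P_trans m) (Bot, n, [j]) (Bot, ack j n, [])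
  /\ (forall c : nat, pvas_reach (P_trans m) (Bot, n, [j]) (Bot, c, []) -> c <= ack j n).
Proof.
  split.
  - exact (reach_ack m j n [] hj).
  - intros c Hreach.
    exact (potential_reach m _ _ Hreach).
Qed.
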